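(* Let an $m$-stage explicit Runge--Kutta method with coefficients $(A,b)$ and step-size coefficient $\gamma=\gamma(A,b)$ be given. Consider a problem of the form $$u_k'(t)=q_k(u(t),t)\,\frac{u_{k-1}(t)-u_k(t)}{\Delta x},\quad k=1,\dots,N,\qquad u_0:=u_N,\qquad u_k(t_0)=u_k^0,$$ with $N\ge1$, $\Delta x>0$, real initial data $u^0\in\mathbb{R}^N$ and functions $q_k:\mathbb{R}^N\times\mathbb{R}\to\mathbb{R}$. Suppose the time step $\Delta t$ and the mesh width $\Delta x$ are chosen so that $$0\le \Delta t\,\frac{q_k(u,t)}{\Delta x}\le\gamma,\qquad k=1,\dots,N,$$ for all values $u,t$. Let $u_{\max}=\max_k u_k^0$ and $u_{\min}=\min_k u_k^0$. Then the numerical solution $u^n$ produced by the Runge--Kutta method applied to this problem satisfies $u^n_k\in[u_{\min},u_{\max}]$ for all $k$ and all $n\ge0$.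
   Context: An explicit Runge--Kutta (ERK) method with $m$ stages is given by a strictly lower-triangular matrix $A=(a_{ij})\in\mathbb{R}^{m\times m}$ and a vector $b\in\mathbb{R}^m$; its nodes are $c_i=\sum_j a_{ij}$. Applied to the ODE system above with step $\Delta t$ and $t_n=t_0+n\Delta t$, one step from $u^n\in\mathbb{R}^N$ is $$y^i_k=u^n_k+\sum_{j=1}^{i-1}a_{ij}\xi^j_k\,(y^j_{k-1}-y^j_k),\ i=1,\dots,m,\qquad u^{n+1}_k=u^n_k+\sum_{i=1}^m b_i\xi^i_k\,(y^i_{k-1}-y^i_k),$$ with $\xi^j_k=\frac{\Delta t}{\Delta x}q_k(y^j,t_n+c_j\Delta t)$ and indices taken periodically ($y_0:=y_N$). Positivity polynomials: treat the $\xi^j_\ell$ ($1\le j\le m$, $\ell\in\mathbb{Z}$) as independent variables and apply the same recursion formally on the infinite grid $\ell\in\mathbb{Z}$; then $u^{n+1}_k=\sum_{i=0}^m P_i(\xi)\,u^n_{k-i}$, where $P_0,\dots,P_m$ are polynomials in the $m(m+1)/2$ variables $\xi^j_\ell$, $1\le j\le m$, $k-(m-j)\le\ell\le k$, which (written in terms of the relative variables $\xi^j_{k-s}$) depend only on $(A,b)$ and not on $k$. The (positivity) step-size coefficient is $$\gamma(A,b):=\sup\{\delta\ge0:\ P_i(\xi)\ge0\ \text{for each }0\le i\le m\text{ and all }\xi\in[0,\delta]^{m(m+1)/2}\},$$ with $\gamma(A,b):=0$ if this set is empty. *)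

From Stdlib Require Import Reals ZArith List Arith.
From Coquelicot Require Import Rbar Lub.
Open Scope R_scope.

Fixpoint sumR (n : nat) (f : nat -> R) : R :=
  match n with
  | O => 0
  | S n' => sumR n' f + f n'
  end.

(* Stages are numbered
   0..m-1 (paper: 1..m).  [F j y k] is the increment xi^j_k (y_{k-1} - y_k)
   of stage j evaluated on stage vector y.  Only a_{ij} with j < i is used
   (A strictly lower triangular). *)
Fixpoint erk_stages {I : Type} (A : nat -> nat -> R)
    (F : nat -> (I -> R) -> I -> R) (u : I -> R) (n : nat) : list (I -> R) :=
  match n with
  | O => nil
  | S i =>
      let l := erk_stages A F u i in
      l ++ (fun k => u k + sumR i (fun j => A i j * F j (nth j l u) k)) :: nil
  end.

Definition erk_step {I : Type} (m : nat) (A : nat -> nat -> R) (b : nat -> R)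
    (F : nat -> (I -> R) -> I -> R) (u : I -> R) : I -> R :=
  let ys := erk_stages A F u m in
  fun k => u k + sumR m (fun i => b i * F i (nth i ys u) k).

Definition node (A : nat -> nat -> R) (i : nat) : R := sumR i (fun j => A i j).

(* Positivity polynomial P_i evaluated at xi (xi j l = xi^{j}_l on the
   infinite grid Z), taking k = 0: coefficient of u_{-i} in u^{n+1}_0,
   obtained by feeding the unit vector at -i (the map is linear in u). *)
Definition pos_poly (m : nat) (A : nat -> nat -> R) (b : nat -> R)
    (i : nat) (xi : nat -> Z -> R) : R :=
  erk_step m A b (fun j y l => xi j l * (y (l - 1)%Z - y l))
    (fun l => if Z.eqb l (- Z.of_nat i)%Z then 1 else 0) 0%Z.

Definition pos_ok (m : nat) (A : nat -> nat -> R) (b : nat -> R) (d : R) : Prop :=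
  0 <= d /\
  forall xi : nat -> Z -> R,
    (forall j l, 0 <= xi j l <= d) ->
    forall i, (i <= m)%nat -> 0 <= pos_poly m A b i xi.

Definition gamma (m : nat) (A : nat -> nat -> R) (b : nat -> R) : Rbar :=
  Lub_Rbar (pos_ok m A b).

Definition prevN (N k : nat) : nat := if Nat.eqb k 1 then N else (k - 1)%nat.

Fixpoint rk_sol (m : nat) (A : nat -> nat -> R) (b : nat -> R) (N : nat)
    (dx dt t0 : R) (q : nat -> (nat -> R) -> R -> R) (u0 : nat -> R)
    (n : nat) : nat -> R :=
  match n with
  | O => u0
  | S n' =>
      let tn := t0 + INR n' * dt in
      erk_step m A b
        (fun j y k => dt / dx * q k y (tn + node A j * dt) * (y (prevN N k) - y k))
        (rk_sol m A b N dx dt t0 q u0 n')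
  end.

Fixpoint umax_of (N : nat) (u : nat -> R) : R :=
  match N with
  | O => u 1%nat
  | S O => u 1%nat
  | S N' => Rmax (umax_of N' u) (u N)
  end.
Fixpoint umin_of (N : nat) (u : nat -> R) : R :=
  match N with
  | O => u 1%nat
  | S O => u 1%nat
  | S N' => Rmin (umin_of N' u) (u N)
  end.

From Stdlib Require Import Reals ZArith List Lra Lia Classical FunctionalExtensionality.
From Coquelicot Require Import Rbar Lub.
Open Scope R_scope.

(* On the infinite grid, one Runge-Kutta step with frozen coefficients xi is
   linear, maps constants to themselves and has stencil {k-m, ..., k}; hence
   u^{n+1}_0 = sum_{i <= m} P_i(xi) u^n_{-i} with sum_i P_i(xi) = 1.  The
   periodic nonlinear problem reduces to this by freezing q at the actual stage
   values and extending the data periodically.  When the frozen coefficients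
   lie in [0, gamma], all P_i(xi) are nonnegative (at the supremum gamma itself
   by continuity of P_i along rays), so every new value is a convex combination
   of old ones and stays in [min u^0, max u^0]. *)

Lemma sumR_ext n f g : (forall i, (i < n)%nat -> f i = g i) -> sumR n f = sumR n g.
Proof.
  induction n as [|n IH]; intros Hfg; simpl; [reflexivity|].
  rewrite IH by (intros; apply Hfg; lia). rewrite Hfg by lia. reflexivity.
Qed.

Lemma sumR_zero n : sumR n (fun _ => 0) = 0.
Proof. induction n as [|n IH]; simpl; [|rewrite IH]; ring. Qed.

Lemma sumR_lincomb n a c f g :
  sumR n (fun i => a * f i + c * g i) = a * sumR n f + c * sumR n g.
Proof. induction n as [|n IH]; simpl; [|rewrite IH]; ring. Qed.

Lemma sumR_nonneg n f : (forall i, (i < n)%nat -> 0 <= f i) -> 0 <= sumR n f.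
Proof.
  induction n as [|n IH]; intros Hf; simpl; [lra|].
  pose proof (Hf n ltac:(lia)). pose proof (IH ltac:(intros; apply Hf; lia)). lra.
Qed.

Lemma term_le_sumR n f i :
  (forall i, (i < n)%nat -> 0 <= f i) -> (i < n)%nat -> f i <= sumR n f.
Proof.
  induction n as [|n IH]; intros Hf Hi; simpl; [lia|].
  assert (Hn := Hf n ltac:(lia)).
  destruct (Nat.eq_dec i n) as [->|Hne].
  - pose proof (sumR_nonneg n f ltac:(intros; apply Hf; lia)). lra.
  - pose proof (IH ltac:(intros; apply Hf; lia) ltac:(lia)). lra.
Qed.

Lemma sumR_single n f i0 : (i0 < n)%nat ->
  (forall i, (i < n)%nat -> i <> i0 -> f i = 0) -> sumR n f = f i0.
Proof.
  induction n as [|n IH]; intros Hi0 Hf; simpl; [lia|].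
  destruct (Nat.eq_dec i0 n) as [->|Hne].
  - rewrite (sumR_ext n f (fun _ => 0)), sumR_zero by (intros; apply Hf; lia). ring.
  - rewrite IH by first [lia | intros; apply Hf; lia]. rewrite (Hf n) by lia. ring.
Qed.

Lemma sumR_convex_bounds n c p lo hi :
  (forall i, (i < n)%nat -> 0 <= p i) -> (forall i, (i < n)%nat -> lo <= c i <= hi) ->
  lo * sumR n p <= sumR n (fun i => c i * p i) <= hi * sumR n p.
Proof.
  induction n as [|n IH]; intros Hp Hc; simpl; [lra|].
  destruct IH as [IHlo IHhi]; [intros; apply Hp; lia|intros; apply Hc; lia|].
  pose proof (Hp n ltac:(lia)). pose proof (Hc n ltac:(lia)). split; nra.
Qed.

Lemma continuity_pt_sumR n (f : nat -> R -> R) x :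
  (forall i, (i < n)%nat -> continuity_pt (f i) x) ->
  continuity_pt (fun t => sumR n (fun i => f i t)) x.
Proof.
  induction n as [|n IH]; intros Hf; simpl.
  - apply continuity_pt_const. intros ? ?. reflexivity.
  - apply continuity_pt_plus; [apply IH; intros; apply Hf; lia|apply Hf; lia].
Qed.

Lemma continuity_pt_nonneg_left f a x : a < x -> continuity_pt f x ->
  (forall t, a <= t < x -> 0 <= f t) -> 0 <= f x.
Proof.
  intros Hax Hf Hpos. destruct (Rle_lt_dec 0 (f x)) as [|Hneg]; [assumption|exfalso].
  destruct (Hf (- f x) ltac:(lra)) as [alp [Halp Hnear]].
  set (h := Rmin alp (x - a)).
  assert (Hh : 0 < h <= alp /\ h <= x - a).
  { unfold h. split; [split|]; [apply Rmin_glb_lt; lra|apply Rmin_l|apply Rmin_r]. }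
  assert (Hclose : Rabs (f (x - h / 2) - f x) < - f x).
  { apply Hnear. unfold D_x, no_cond. simpl. unfold R_dist.
    split; [split; [trivial|lra]|]. rewrite Rabs_left; lra. }
  pose proof (Hpos (x - h / 2) ltac:(lra)). apply Rabs_def2 in Hclose. lra.
Qed.

Section Stages.
Context {I : Type}.
Variable A : nat -> nat -> R.
Implicit Types (F G : nat -> (I -> R) -> I -> R) (u : I -> R).

Definition stage (F : nat -> (I -> R) -> I -> R) (u : I -> R) (j : nat) : I -> R :=
  nth j (erk_stages A F u (S j)) u.

Lemma erk_stages_length F u n : length (erk_stages A F u n) = n.
Proof. induction n as [|n IH]; simpl; [|rewrite length_app, IH; simpl]; lia. Qed.

Lemma nth_erk_stages F u n j : (j < n)%nat -> nth j (erk_stages A F u n) u = stage F u j.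
Proof.
  induction n as [|n IH]; intros Hj; [lia|].
  destruct (Nat.eq_dec j n) as [->|Hne]; [reflexivity|].
  simpl. rewrite app_nth1 by (rewrite erk_stages_length; lia). apply IH; lia.
Qed.

Lemma stageE F u j k :
  stage F u j k = u k + sumR j (fun i => A j i * F i (stage F u i) k).
Proof.
  unfold stage at 1; simpl.
  rewrite app_nth2, erk_stages_length, Nat.sub_diag by (rewrite erk_stages_length; lia).
  simpl. f_equal. apply sumR_ext; intros i Hi. rewrite nth_erk_stages by lia. reflexivity.
Qed.

Lemma erk_stepE m b F u k :
  erk_step m A b F u k = u k + sumR m (fun i => b i * F i (stage F u i) k).
Proof.
  unfold erk_step. f_equal. apply sumR_ext; intros i Hi. rewrite nth_erk_stages; auto.
Qed.

Lemma stage_ext_on F G u j :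
  (forall i k, (i < j)%nat -> F i (stage F u i) k = G i (stage F u i) k) ->
  stage F u j = stage G u j.
Proof.
  induction j as [j IH] using lt_wf_ind; intros HFG.
  apply functional_extensionality; intro k. rewrite !stageE. f_equal.
  apply sumR_ext; intros i Hi. rewrite HFG by lia.
  rewrite IH by first [lia | intros; apply HFG; lia]. reflexivity.
Qed.

Lemma erk_step_ext_on m b F G u k :
  (forall i k, (i < m)%nat -> F i (stage F u i) k = G i (stage F u i) k) ->
  erk_step m A b F u k = erk_step m A b G u k.
Proof.
  intros HFG. rewrite !erk_stepE. f_equal. apply sumR_ext; intros i Hi.
  rewrite HFG by lia. rewrite (stage_ext_on F G u i) by (intros; apply HFG; lia).
  reflexivity.
Qed.

End Stages.

Definition upwind (xi : nat -> Z -> R) : nat -> (Z -> R) -> Z -> R :=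
  fun j y l => xi j l * (y (l - 1)%Z - y l).

Lemma upwindE xi j y l : upwind xi j y l = xi j l * (y (l - 1)%Z - y l).
Proof. reflexivity. Qed.

Definition unit_at (i : nat) : Z -> R := fun l => if Z.eqb l (- Z.of_nat i) then 1 else 0.

Lemma pos_polyE m A b i xi : pos_poly m A b i xi = erk_step m A b (upwind xi) (unit_at i) 0%Z.
Proof. reflexivity. Qed.

Section UpwindOnZ.
Variables (A : nat -> nat -> R) (xi : nat -> Z -> R).

Lemma stage_upwind_lincomb a c U V j l :
  stage A (upwind xi) (fun l => a * U l + c * V l) j l
  = a * stage A (upwind xi) U j l + c * stage A (upwind xi) V j l.
Proof.
  revert l; induction j as [j IH] using lt_wf_ind; intro l.
  rewrite !stageE.
  rewrite (sumR_ext j _ (fun i => a * (A j i * upwind xi i (stage A (upwind xi) U i) l)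
                                 + c * (A j i * upwind xi i (stage A (upwind xi) V i) l))).
  - rewrite sumR_lincomb. cbv beta. ring.
  - intros i Hi. rewrite !upwindE. rewrite !IH by exact Hi. ring.
Qed.

Lemma erk_step_upwind_lincomb m b a c U V W k :
  (forall l, W l = a * U l + c * V l) ->
  erk_step m A b (upwind xi) W k
  = a * erk_step m A b (upwind xi) U k + c * erk_step m A b (upwind xi) V k.
Proof.
  intros HW. replace W with (fun l => a * U l + c * V l) by (apply functional_extensionality; auto).
  rewrite !erk_stepE.
  rewrite (sumR_ext m _ (fun i => a * (b i * upwind xi i (stage A (upwind xi) U i) k)
                                 + c * (b i * upwind xi i (stage A (upwind xi) V i) k))).
  - rewrite sumR_lincomb. cbv beta. ring.
  - intros i Hi. rewrite !upwindE. rewrite !stage_upwind_lincomb. ring.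
Qed.

Lemma stage_upwind_const c j l : stage A (upwind xi) (fun _ => c) j l = c.
Proof.
  revert l; induction j as [j IH] using lt_wf_ind; intro l.
  rewrite stageE, (sumR_ext j _ (fun _ => 0)), sumR_zero; [ring|].
  intros i Hi. rewrite !upwindE. rewrite !IH by exact Hi. ring.
Qed.

Lemma erk_step_upwind_const m b c k : erk_step m A b (upwind xi) (fun _ => c) k = c.
Proof.
  rewrite erk_stepE, (sumR_ext m _ (fun _ => 0)), sumR_zero; [ring|].
  intros i Hi. rewrite !upwindE. rewrite !stage_upwind_const. ring.
Qed.

Lemma erk_step_upwind_sumR m b n (c : nat -> R) (g : nat -> Z -> R) k :
  erk_step m A b (upwind xi) (fun l => sumR n (fun i => c i * g i l)) k
  = sumR n (fun i => c i * erk_step m A b (upwind xi) (g i) k).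
Proof.
  induction n as [|n IH]; simpl.
  - apply erk_step_upwind_const.
  - rewrite (erk_step_upwind_lincomb m b 1 (c n) (fun l => sumR n (fun i => c i * g i l)) (g n))
      by (intros; simpl; ring).
    rewrite IH. ring.
Qed.

Lemma stage_upwind_local U V j l :
  (forall l', (l - Z.of_nat j <= l' <= l)%Z -> U l' = V l') ->
  stage A (upwind xi) U j l = stage A (upwind xi) V j l.
Proof.
  revert l; induction j as [j IH] using lt_wf_ind; intros l HUV.
  rewrite !stageE, HUV by lia. f_equal.
  apply sumR_ext; intros i Hi. rewrite !upwindE.
  rewrite (IH i Hi l), (IH i Hi (l - 1)%Z) by (intros; apply HUV; lia). reflexivity.
Qed.

Lemma erk_step_upwind_local m b U V k :
  (forall l', (k - Z.of_nat m <= l' <= k)%Z -> U l' = V l') ->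
  erk_step m A b (upwind xi) U k = erk_step m A b (upwind xi) V k.
Proof.
  intros HUV. rewrite !erk_stepE, HUV by lia. f_equal.
  apply sumR_ext; intros i Hi. rewrite !upwindE.
  rewrite (stage_upwind_local U V i k), (stage_upwind_local U V i (k - 1)%Z)
    by (intros; apply HUV; lia).
  reflexivity.
Qed.

Lemma erk_step_upwind_pos_poly m b U :
  erk_step m A b (upwind xi) U 0%Z
  = sumR (S m) (fun i => U (- Z.of_nat i)%Z * pos_poly m A b i xi).
Proof.
  rewrite (erk_step_upwind_local m b U
             (fun l => sumR (S m) (fun i => U (- Z.of_nat i)%Z * unit_at i l))).
  - apply erk_step_upwind_sumR.
  - intros l Hl. rewrite (sumR_single _ _ (Z.to_nat (- l))); unfold unit_at.
    + rewrite Z2Nat.id, Z.opp_involutive, Z.eqb_refl by lia. ring.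
    + lia.
    + intros i Hi Hne. destruct (Z.eqb_spec l (- Z.of_nat i)); [lia|ring].
Qed.

Lemma sumR_pos_poly m b : sumR (S m) (fun i => pos_poly m A b i xi) = 1.
Proof.
  rewrite <- (erk_step_upwind_const m b 1 0%Z), erk_step_upwind_pos_poly.
  apply sumR_ext; intros; ring.
Qed.

End UpwindOnZ.

Lemma stage_upwind_continuous A (xs : R -> nat -> Z -> R) U x j l :
  (forall j l, continuity_pt (fun t => xs t j l) x) ->
  continuity_pt (fun t => stage A (upwind (xs t)) U j l) x.
Proof.
  intros Hxs; revert l; induction j as [j IH] using lt_wf_ind; intro l.
  rewrite (functional_extensionality _ _ (fun t => stageE A (upwind (xs t)) U j l)).
  apply continuity_pt_plus; [apply continuity_pt_const; intros ? ?; reflexivity|].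
  apply continuity_pt_sumR; intros i Hi.
  apply continuity_pt_mult; [apply continuity_pt_const; intros ? ?; reflexivity|].
  apply continuity_pt_mult; [apply Hxs|apply continuity_pt_minus; apply IH; exact Hi].
Qed.

Lemma pos_poly_continuous m A b i (xs : R -> nat -> Z -> R) x :
  (forall j l, continuity_pt (fun t => xs t j l) x) ->
  continuity_pt (fun t => pos_poly m A b i (xs t)) x.
Proof.
  intros Hxs. change (continuity_pt (fun t => erk_step m A b (upwind (xs t)) (unit_at i) 0%Z) x).
  rewrite (functional_extensionality _ _
             (fun t => erk_stepE A m b (upwind (xs t)) (unit_at i) 0%Z)).
  apply continuity_pt_plus; [apply continuity_pt_const; intros ? ?; reflexivity|].
  apply continuity_pt_sumR; intros j Hj.
  apply continuity_pt_mult; [apply continuity_pt_const; intros ? ?; reflexivity|].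
  apply continuity_pt_mult; [apply Hxs|].
  apply continuity_pt_minus; apply stage_upwind_continuous, Hxs.
Qed.

Lemma pos_ok_0 m A b : pos_ok m A b 0.
Proof.
  split; [lra|]. intros xi Hxi i Hi.
  rewrite pos_polyE, erk_stepE, (sumR_ext m _ (fun _ => 0)), sumR_zero.
  - unfold unit_at. destruct Z.eqb; lra.
  - intros j Hj. rewrite upwindE.
    replace (xi j 0%Z) with 0 by (pose proof (Hxi j 0%Z); lra). ring.
Qed.

Lemma pos_ok_antimono m A b d d' : 0 <= d -> d <= d' -> pos_ok m A b d' -> pos_ok m A b d.
Proof.
  intros Hd Hdd' [_ Hok]. split; [exact Hd|].
  intros xi Hxi. apply Hok. intros j l. pose proof (Hxi j l). lra.
Qed.

Lemma Lub_Rbar_gt (E : R -> Prop) x :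
  Rbar_lt (Finite x) (Lub_Rbar E) -> exists y, E y /\ x < y.
Proof.
  intros Hlt. apply NNPP; intros Hnone.
  destruct (Lub_Rbar_correct E) as [_ Hleast].
  apply (Rbar_lt_not_le _ _ Hlt), Hleast. intros y Hy. simpl.
  destruct (Rle_lt_dec y x) as [|Hxy]; [assumption|]. exfalso; eauto.
Qed.

Lemma gamma_nonneg m A b : Rbar_le (Finite 0) (gamma m A b).
Proof. destruct (Lub_Rbar_correct (pos_ok m A b)) as [Hub _]. apply Hub, pos_ok_0. Qed.

Lemma pos_ok_lt_gamma m A b d :
  0 <= d -> Rbar_lt (Finite d) (gamma m A b) -> pos_ok m A b d.
Proof.
  intros Hd Hlt. destruct (Lub_Rbar_gt _ _ Hlt) as [d' [Hd' Hdd']].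
  apply (pos_ok_antimono m A b d d'); [exact Hd|lra|exact Hd'].
Qed.

(* The supremum is attained: [P_i] is continuous along the ray [t * xi]. *)
Lemma pos_ok_closed m A b r :
  0 < r -> (forall d, 0 <= d < r -> pos_ok m A b d) -> pos_ok m A b r.
Proof.
  intros Hr Hbelow. split; [lra|]. intros xi Hxi i Hi.
  set (xs := fun (t : R) j l => t * xi j l).
  replace xi with (xs 1)
    by (apply functional_extensionality; intro j; apply functional_extensionality; intro l;
        unfold xs; ring).
  apply (continuity_pt_nonneg_left (fun t => pos_poly m A b i (xs t)) 0 1); [lra| |].
  - apply pos_poly_continuous. intros j l.
    apply continuity_pt_mult; [exact (derivable_continuous_pt _ _ (derivable_pt_id 1))|].
    apply continuity_pt_const; intros ? ?; reflexivity.
  - intros t Ht. apply (Hbelow (t * r)); [nra| |exact Hi].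
    intros j l. pose proof (Hxi j l). unfold xs. split; nra.
Qed.

Lemma pos_ok_le_gamma m A b d :
  0 <= d -> Rbar_le (Finite d) (gamma m A b) -> pos_ok m A b d.
Proof.
  intros Hd Hle. destruct (Rbar_le_lt_or_eq_dec _ _ Hle) as [Hlt|Heq].
  - apply pos_ok_lt_gamma; assumption.
  - destruct (Req_dec d 0) as [->|Hd0]; [apply pos_ok_0|].
    apply pos_ok_closed; [lra|]. intros d' Hd'.
    apply pos_ok_lt_gamma; [lra|]. rewrite <- Heq. simpl. lra.
Qed.

Lemma pos_poly_nonneg m A b xi M :
  (forall j l, (j < m)%nat -> 0 <= xi j l <= M /\ Rbar_le (Finite (xi j l)) (gamma m A b)) ->
  forall i, (i <= m)%nat -> 0 <= pos_poly m A b i xi.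
Proof.
  intros Hxi i Hi.
  (* Only the stages j < m enter P_i; truncating the others keeps xi bounded. *)
  set (xi0 := fun j l => if (j <? m)%nat then xi j l else 0).
  replace (pos_poly m A b i xi) with (pos_poly m A b i xi0).
  2:{ rewrite !pos_polyE. apply erk_step_ext_on. intros j l Hj. rewrite !upwindE.
      unfold xi0. destruct (Nat.ltb_spec j m); [reflexivity|lia]. }
  assert (Hxi0 : forall d, 0 <= d -> (forall j l, (j < m)%nat -> xi j l <= d) ->
                 Rbar_le (Finite d) (gamma m A b) -> 0 <= pos_poly m A b i xi0).
  { intros d Hd Hxid Hdg. apply (pos_ok_le_gamma m A b d Hd Hdg); [|exact Hi].
    intros j l. unfold xi0. destruct (Nat.ltb_spec j m) as [Hj|]; [|lra].
    split; [apply Hxi, Hj|apply Hxid, Hj]. }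
  pose proof (gamma_nonneg m A b) as Hg0.
  destruct (gamma m A b) as [r| |] eqn:Hg; simpl in Hg0; [| |contradiction].
  - apply (Hxi0 r Hg0); [|apply Rle_refl].
    intros j l Hj. destruct (Hxi j l Hj) as [_ Hle]. exact Hle.
  - apply (Hxi0 (Rmax 0 M) (Rmax_l 0 M)); [|exact I].
    intros j l Hj. destruct (Hxi j l Hj) as [[_ HM] _]. pose proof (Rmax_r 0 M). lra.
Qed.

(* The periodic index in 1..N of the grid point k + l. *)
Definition wrap (N k : nat) (l : Z) : nat :=
  S (Z.to_nat ((Z.of_nat k - 1 + l) mod Z.of_nat N)).

Lemma wrap_range N k l : (1 <= N)%nat -> (1 <= wrap N k l <= N)%nat.
Proof.
  intros HN. unfold wrap.
  pose proof (Z.mod_pos_bound (Z.of_nat k - 1 + l) (Z.of_nat N) ltac:(lia)). lia.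
Qed.

Lemma wrap_0 N k : (1 <= k <= N)%nat -> wrap N k 0 = k.
Proof. intros Hk. unfold wrap. rewrite Z.add_0_r, Z.mod_small by lia. lia. Qed.

Lemma prevN_wrap N k l : (1 <= N)%nat -> prevN N (wrap N k l) = wrap N k (l - 1).
Proof.
  intros HN. unfold wrap, prevN.
  set (a := (Z.of_nat k - 1 + l)%Z).
  replace (Z.of_nat k - 1 + (l - 1))%Z with (a - 1)%Z by (unfold a; lia).
  pose proof (Z.mod_pos_bound a (Z.of_nat N) ltac:(lia)) as Hbound.
  pose proof (Z.div_mod a (Z.of_nat N) ltac:(lia)) as Hdiv.
  set (r := (a mod Z.of_nat N)%Z) in *. set (q := (a / Z.of_nat N)%Z) in *.
  destruct (Z.eq_dec r 0) as [Hr0|Hr0].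
  - rewrite Hr0, <- (Z.mod_unique (a - 1) (Z.of_nat N) (q - 1) (Z.of_nat N - 1)) by lia.
    simpl. lia.
  - rewrite <- (Z.mod_unique (a - 1) (Z.of_nat N) q (r - 1)) by lia.
    destruct (Nat.eqb_spec (S (Z.to_nat r)) 1); lia.
Qed.

Definition upwind_periodic (N : nat) (C : nat -> nat -> R) : nat -> (nat -> R) -> nat -> R :=
  fun j y k => C j k * (y (prevN N k) - y k).

Lemma upwind_periodicE N C j y k :
  upwind_periodic N C j y k = C j k * (y (prevN N k) - y k).
Proof. reflexivity. Qed.

Section PeriodicLift.
Variables (A : nat -> nat -> R) (N : nat) (C : nat -> nat -> R) (u : nat -> R) (k : nat).
Hypothesis HN : (1 <= N)%nat.

Let xi : nat -> Z -> R := fun j l => C j (wrap N k l).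
Let U : Z -> R := fun l => u (wrap N k l).

Lemma stage_upwind_periodic j l :
  stage A (upwind_periodic N C) u j (wrap N k l) = stage A (upwind xi) U j l.
Proof.
  revert l; induction j as [j IH] using lt_wf_ind; intro l.
  rewrite !stageE. f_equal. apply sumR_ext; intros i Hi.
  rewrite upwindE, upwind_periodicE, prevN_wrap, !IH by assumption. reflexivity.
Qed.

Lemma erk_step_upwind_periodic m b : (1 <= k <= N)%nat ->
  erk_step m A b (upwind_periodic N C) u k = erk_step m A b (upwind xi) U 0%Z.
Proof.
  intros Hk. rewrite !erk_stepE. unfold U at 1. rewrite wrap_0 by exact Hk. f_equal.
  apply sumR_ext; intros i Hi. rewrite upwindE, upwind_periodicE.
  rewrite <- !stage_upwind_periodic, <- prevN_wrap by assumption.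
  unfold xi. rewrite wrap_0 by exact Hk. reflexivity.
Qed.

End PeriodicLift.

Lemma erk_step_upwind_bounds m A b N (xf : nat -> (nat -> R) -> nat -> R) u lo hi k :
  (1 <= N)%nat ->
  (forall j y k, (1 <= k <= N)%nat ->
     0 <= xf j y k /\ Rbar_le (Finite (xf j y k)) (gamma m A b)) ->
  (forall k, (1 <= k <= N)%nat -> lo <= u k <= hi) -> (1 <= k <= N)%nat ->
  lo <= erk_step m A b (fun j y k => xf j y k * (y (prevN N k) - y k)) u k <= hi.
Proof.
  intros HN Hxf Hu Hk.
  set (F := fun j y k => xf j y k * (y (prevN N k) - y k)).
  set (C := fun j k => xf j (stage A F u j) k).
  rewrite (erk_step_ext_on A m b F (upwind_periodic N C)) by reflexivity.
  rewrite erk_step_upwind_periodic, erk_step_upwind_pos_poly by assumption.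
  set (xi := fun j l => C j (wrap N k l)).
  set (M := sumR m (fun j => sumR N (fun k' => C j (S k')))).
  assert (HC : forall j k', (1 <= k' <= N)%nat -> 0 <= C j k') by (intros; apply Hxf; assumption).
  assert (Hxi : forall j l, (j < m)%nat ->
                0 <= xi j l <= M /\ Rbar_le (Finite (xi j l)) (gamma m A b)).
  { intros j l Hj. pose proof (wrap_range N k l HN) as Hw. unfold xi.
    split; [split; [apply HC, Hw|]|apply Hxf, Hw].
    replace (wrap N k l) with (S (wrap N k l - 1)) by lia.
    apply Rle_trans with (sumR N (fun k' => C j (S k'))).
    - apply (term_le_sumR N (fun k' => C j (S k'))); [intros; apply HC; lia|lia].
    - apply (term_le_sumR m (fun j => sumR N (fun k' => C j (S k')))); [|exact Hj].
      intros; apply sumR_nonneg; intros; apply HC; lia. }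
  pose proof (sumR_convex_bounds (S m) (fun i => u (wrap N k (- Z.of_nat i)))
                (fun i => pos_poly m A b i xi) lo hi) as Hconvex.
  rewrite sumR_pos_poly, !Rmult_1_r in Hconvex. apply Hconvex.
  - intros i Hi. apply (pos_poly_nonneg m A b xi M Hxi). lia.
  - intros i _. apply Hu, wrap_range, HN.
Qed.

Lemma umin_of_le_le_umax_of N u k :
  (1 <= k <= N)%nat -> umin_of N u <= u k <= umax_of N u.
Proof.
  induction N as [|N IH]; intros Hk; [lia|].
  destruct N as [|N]; [replace k with 1%nat by lia; simpl; lra|].
  change (umin_of (S (S N)) u) with (Rmin (umin_of (S N) u) (u (S (S N)))).
  change (umax_of (S (S N)) u) with (Rmax (umax_of (S N) u) (u (S (S N)))).
  pose proof (Rmin_l (umin_of (S N) u) (u (S (S N)))).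
  pose proof (Rmin_r (umin_of (S N) u) (u (S (S N)))).
  pose proof (Rmax_l (umax_of (S N) u) (u (S (S N)))).
  pose proof (Rmax_r (umax_of (S N) u) (u (S (S N)))).
  destruct (Nat.eq_dec k (S (S N))) as [->|Hne]; [lra|].
  specialize (IH ltac:(lia)). lra.
Qed.

Theorem theorem1 (m : nat) (A : nat -> nat -> R) (b : nat -> R)
  (N : nat) (dx dt t0 : R) (q : nat -> (nat -> R) -> R -> R) (u0 : nat -> R) :
  (1 <= N)%nat ->
  0 < dx ->
  (forall (k : nat) (u : nat -> R) (t : R), (1 <= k <= N)%nat ->
     0 <= dt * q k u t / dx /\ Rbar_le (Finite (dt * q k u t / dx)) (gamma m A b)) ->
  forall (n k : nat), (1 <= k <= N)%nat ->
    umin_of N u0 <= rk_sol m A b N dx dt t0 q u0 n k <= umax_of N u0.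
Proof.
  intros HN _ Hq n. induction n as [|n IH]; intros k Hk; simpl.
  - apply umin_of_le_le_umax_of, Hk.
  - apply erk_step_upwind_bounds; [exact HN| |exact IH|exact Hk].
    intros j y k' Hk'. rewrite <- Rmult_div_swap. apply Hq, Hk'.
Qed.
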